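(* Let $\eta\in\mathbb{R}\setminus\{0\}$ and let $\varepsilon',\ell,m,M>0$. There exists $\xi_0=\xi_0(|\eta|,\varepsilon',\ell,m,M)\in\mathbb{N}^*$ with the following property. Let $X\subseteq\mathbb{R}^2$ be non-empty, let $\varepsilon>0$, and let $\gamma=\bigcup_{i\in S}I_i$ be a union of segments in $\mathbb{R}^2$ such that $\gamma$ is $\varepsilon$-dense in $X$, every $I_i$ has slope of absolute value less than $M$, and every $I_i$ has length greater than $\ell$. Then for every integer $\xi\ge\xi_0$ there is a subset $\gamma'\subseteq J_{\eta,\xi}(\gamma)$ which is a union of segments, is $(\varepsilon+\varepsilon')$-dense in $\mathrm{Str}(X,(0,\eta))$, whose segments all have slopes of absolute value greater than $m$, and whose segments all have length greater than $|\eta|$.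
   Context: For $X,Y\subseteq\mathbb{R}^2$ and $\varepsilon>0$, $X$ is $\varepsilon$-dense in $Y$ if $Y\subseteq B_\varepsilon(X)$, the open $\varepsilon$-neighbourhood of $X$. For $v\in\mathbb{R}^2\setminus\{0\}$, $\mathrm{Str}(X,v)=X+[-v,v]$ (Minkowski sum with the segment from $-v$ to $v$). For $\xi\in\mathbb{N}^*$, $\phi_\xi:\mathbb{R}\to[-1,1]$ is the triangle wave $\phi_\xi(x)=(-1)^{z+1}(4\xi x-2z-1)$ for $z\in\mathbb{Z}$, $x\in[\frac{z}{2\xi},\frac{z+1}{2\xi})$, and for $\eta\ne0$, $J_{\eta,\xi}(x,y)=(x,y+\eta\phi_\xi(x))$, a homeomorphism of $\mathbb{R}^2$. *)

From Stdlib Require Import Reals Lra.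
Open Scope R_scope.

Definition pt := (R * R)%type.

Definition dist2 (p q : pt) : R :=
  sqrt ((fst p - fst q)^2 + (snd p - snd q)^2).

Definition seg := (pt * pt)%type.

Definition seg_pts (s : seg) : pt -> Prop :=
  fun x => exists t, 0 <= t <= 1 /\
    x = (fst (fst s) + t * (fst (snd s) - fst (fst s)),
         snd (fst s) + t * (snd (snd s) - snd (fst s))).

Definition seg_len (s : seg) : R := dist2 (fst s) (snd s).

Definition slope_abs_lt (s : seg) (M : R) : Prop :=
  let dx := fst (snd s) - fst (fst s) in
  let dy := snd (snd s) - snd (fst s) in
  dx <> 0 /\ Rabs (dy / dx) < M.

(* |slope| > m  (vertical segments have infinite slope) *)
Definition slope_abs_gt (s : seg) (m : R) : Prop :=
  let dx := fst (snd s) - fst (fst s) in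
  let dy := snd (snd s) - snd (fst s) in
  dx = 0 \/ m < Rabs (dy / dx).

Definition union_segs (F : seg -> Prop) : pt -> Prop :=
  fun x => exists s, F s /\ seg_pts s x.

Definition eps_dense (X : pt -> Prop) (eps : R) (Y : pt -> Prop) : Prop :=
  forall y, Y y -> exists x, X x /\ dist2 x y < eps.

Definition Str (X : pt -> Prop) (v : pt) : pt -> Prop :=
  fun y => exists x t, X x /\ -1 <= t <= 1 /\
    y = (fst x + t * fst v, snd x + t * snd v).

(* floor via up: up r - 1 <= r < up r *)
Definition floorZ (r : R) : Z := (up r - 1)%Z.

Definition phi (xi : nat) (x : R) : R :=
  let z := floorZ (2 * INR xi * x) in
  powerRZ (-1) (z + 1) * (4 * INR xi * x - 2 * IZR z - 1).

Definition J (eta : R) (xi : nat) (p : pt) : pt :=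
  (fst p, snd p + eta * phi xi (fst p)).

Definition image (f : pt -> pt) (A : pt -> Prop) : pt -> Prop :=
  fun y => exists x, A x /\ y = f x.

(* On each cell z/(2ξ) <= x <= (z+1)/(2ξ) the triangle wave φ_ξ is affine with
   slope ±4ξ, so J_{η,ξ} maps the part of a segment of γ lying over a whole cell
   onto a segment whose slope is the old one ± 4ξη; for ξ large these pieces are
   steeper than m and longer than |η|, and γ' is their union.  On each cell φ_ξ
   also takes every value in [-1,1], and once ξ is large every segment of γ
   (longer than ℓ, slope below M) spans a whole cell near each of its points.
   Hence for g in γ the point g + t(0,η) is within (1+M)/ξ of the point of γ'
   above such a cell at which φ_ξ = t. *)

From Stdlib Require Import Reals Lra Lia.
Open Scope R_scope.

Definition seg_point (A B : pt) (t : R) : pt :=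
  (fst A + t * (fst B - fst A), snd A + t * (snd B - snd A)).

Definition slope (s : seg) : R :=
  (snd (snd s) - snd (fst s)) / (fst (snd s) - fst (fst s)).

Lemma rise_slope (p q : pt) : fst q - fst p <> 0 ->
  snd q - snd p = slope (p, q) * (fst q - fst p).
Proof. intros Hdx. unfold slope; simpl. field. exact Hdx. Qed.

Lemma slope_abs_ltP (A B : pt) M :
  slope_abs_lt (A, B) M -> fst B - fst A <> 0 /\ Rabs (slope (A, B)) < M.
Proof. intros H. exact H. Qed.

Lemma seg_point_sub (A B : pt) t0 t1 lam :
  seg_point (seg_point A B t0) (seg_point A B t1) lam = seg_point A B (t0 + lam * (t1 - t0)).
Proof. unfold seg_point; simpl; f_equal; ring. Qed.

Lemma seg_point_rise (A B : pt) t t' : fst B - fst A <> 0 ->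
  snd (seg_point A B t) - snd (seg_point A B t')
  = slope (A, B) * (fst (seg_point A B t) - fst (seg_point A B t')).
Proof. intros Hdx. unfold seg_point, slope; simpl. field. exact Hdx. Qed.

Lemma seg_point_fst_between (A B : pt) t : 0 <= t <= 1 ->
  Rmin (fst A) (fst B) <= fst (seg_point A B t) <= Rmax (fst A) (fst B).
Proof.
  intros Ht. unfold seg_point, Rmin, Rmax; simpl.
  destruct (Rle_dec (fst A) (fst B)); split; nra.
Qed.

Lemma seg_point_at_abscissa (A B : pt) u : fst B - fst A <> 0 ->
  Rmin (fst A) (fst B) <= u <= Rmax (fst A) (fst B) ->
  exists t, 0 <= t <= 1 /\ fst (seg_point A B t) = u.
Proof.
  intros Hdx Hu. set (t := (u - fst A) / (fst B - fst A)).
  assert (Ht : u - fst A = t * (fst B - fst A)) by (unfold t; field; exact Hdx).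
  exists t. split.
  - unfold Rmin, Rmax in Hu.
    destruct (Rle_dec (fst A) (fst B)); destruct (Rtotal_order (fst B - fst A) 0)
      as [|[|]]; try lra; split; nra.
  - unfold seg_point; simpl. lra.
Qed.

Lemma Rmax_minus_Rmin a b : Rmax a b - Rmin a b = Rabs (b - a).
Proof.
  unfold Rmax, Rmin, Rabs. destruct (Rle_dec a b); destruct (Rcase_abs (b - a)); lra.
Qed.

Lemma Rabs_plus_ge a b : Rabs b - Rabs a <= Rabs (a + b).
Proof.
  pose proof (Rabs_triang_inv b (- a)) as H. rewrite Rabs_Ropp in H.
  replace (b - - a) with (a + b) in H by ring. exact H.
Qed.

Lemma Rabs_le_div c d k : 0 < c -> -k <= c * d <= k -> Rabs d <= k / c.
Proof.
  intros Hc Hd. apply Rabs_le. unfold Rdiv.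
  replace d with (c * d * / c) by (field; lra).
  pose proof (Rinv_0_lt_compat c Hc). split; nra.
Qed.

Lemma dist2_triangle (p q r : pt) : dist2 p q <= dist2 p r + dist2 r q.
Proof. unfold dist2. rewrite <- !Rsqr_pow2. apply triangle. Qed.

Lemma dist2_shift (p q : pt) v : dist2 (fst p, snd p + v) (fst q, snd q + v) = dist2 p q.
Proof. unfold dist2; simpl. f_equal. ring. Qed.

Lemma abs_snd_le_dist2 (p q : pt) : Rabs (snd p - snd q) <= dist2 p q.
Proof.
  unfold dist2. rewrite <- sqrt_Rsqr_abs, Rsqr_pow2.
  apply sqrt_le_1_alt. pose proof (pow2_ge_0 (fst p - fst q)). lra.
Qed.

Lemma dist2_le_abs (p q : pt) : dist2 p q <= Rabs (fst p - fst q) + Rabs (snd p - snd q).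
Proof.
  pose proof (Rabs_pos (fst p - fst q)). pose proof (Rabs_pos (snd p - snd q)).
  unfold dist2. rewrite <- (sqrt_pow2 (Rabs (fst p - fst q) + Rabs (snd p - snd q))) by lra.
  apply sqrt_le_1_alt. rewrite <- (pow2_abs (fst p - fst q)), <- (pow2_abs (snd p - snd q)).
  nra.
Qed.

Lemma dist2_le_of_rise (p q : pt) k : snd p - snd q = k * (fst p - fst q) ->
  dist2 p q <= (1 + Rabs k) * Rabs (fst p - fst q).
Proof.
  intros Hk. eapply Rle_trans; [apply dist2_le_abs|].
  rewrite Hk, Rabs_mult. lra.
Qed.

Lemma powerRZ_m1_sqr z : powerRZ (-1) z * powerRZ (-1) z = 1.
Proof. rewrite <- powerRZ_mult. replace (-1 * -1) with 1 by ring. apply powerRZ_R1. Qed.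

Lemma Rabs_powerRZ_m1 z : Rabs (powerRZ (-1) z) = 1.
Proof.
  pose proof (Rabs_pos (powerRZ (-1) z)).
  assert (Rabs (powerRZ (-1) z) * Rabs (powerRZ (-1) z) = 1).
  { rewrite <- Rabs_mult, powerRZ_m1_sqr. apply Rabs_R1. }
  nra.
Qed.

Lemma floorZ_unique r z : IZR z <= r < IZR z + 1 -> floorZ r = z.
Proof.
  intros H. unfold floorZ.
  rewrite <- (tech_up r (z + 1)) by (rewrite plus_IZR; simpl; lra). lia.
Qed.

Lemma powerRZ_m1_mul_bound z t : -1 <= t <= 1 -> -1 <= powerRZ (-1) z * t <= 1.
Proof.
  intros Ht. assert (Rabs (powerRZ (-1) z * t) <= 1) as Hst.
  { rewrite Rabs_mult, Rabs_powerRZ_m1, Rmult_1_l. apply Rabs_le. exact Ht. }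
  revert Hst. unfold Rabs. destruct (Rcase_abs (powerRZ (-1) z * t)); lra.
Qed.

Lemma int_cell_near Lo Hi W : Lo <= W <= Hi -> 2 <= Hi - Lo ->
  exists z, Lo <= IZR z /\ IZR z + 1 <= Hi /\ W - 2 <= IZR z /\ IZR z + 1 <= W + 2.
Proof.
  intros HW HL. destruct (archimed W) as [Hup1 Hup2].
  set (z0 := (up W - 1)%Z).
  assert (Hz0 : IZR z0 <= W < IZR z0 + 1) by (unfold z0; rewrite minus_IZR; simpl; lra).
  destruct (Rle_dec Lo (IZR z0)).
  - destruct (Rle_dec (IZR z0 + 1) Hi).
    + exists z0. lra.
    + exists (z0 - 1)%Z. rewrite minus_IZR. simpl. lra.
  - exists (z0 + 1)%Z. rewrite plus_IZR. simpl. lra.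
Qed.

(* At the right end of the cell [floorZ] jumps to [z + 1], but both branches
   of the triangle wave agree there. *)
Lemma phi_on_cell xi z x : IZR z <= 2 * INR xi * x <= IZR z + 1 ->
  phi xi x = powerRZ (-1) (z + 1) * (4 * INR xi * x - 2 * IZR z - 1).
Proof.
  intros H. unfold phi.
  destruct (Rlt_dec (2 * INR xi * x) (IZR z + 1)).
  - rewrite (floorZ_unique _ z) by lra. reflexivity.
  - rewrite (floorZ_unique _ (z + 1)) by (rewrite plus_IZR; simpl; lra).
    rewrite powerRZ_add, plus_IZR by lra. simpl.
    replace (4 * INR xi * x) with (2 * (IZR z + 1)) by lra. ring.
Qed.

Section Cell_pieces.

Variables (eta : R) (xi : nat).
Hypothesis xi_pos : 0 < INR xi.

Lemma J_seg_point_on_cell z (P Q : pt) lam :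
  IZR z <= 2 * INR xi * fst P <= IZR z + 1 ->
  IZR z <= 2 * INR xi * fst Q <= IZR z + 1 -> 0 <= lam <= 1 ->
  J eta xi (seg_point P Q lam) = seg_point (J eta xi P) (J eta xi Q) lam.
Proof.
  intros HP HQ Hlam. unfold J, seg_point; simpl.
  rewrite !(phi_on_cell xi z) by (auto; nra).
  f_equal; ring.
Qed.

Lemma J_cell_rise z (P Q : pt) :
  2 * INR xi * fst P = IZR z -> 2 * INR xi * fst Q = IZR z + 1 ->
  snd (J eta xi Q) - snd (J eta xi P) = snd Q - snd P + 2 * eta * powerRZ (-1) (z + 1).
Proof.
  intros HP HQ. unfold J; simpl.
  rewrite !(phi_on_cell xi z) by lra.
  replace (4 * INR xi * fst P) with (2 * IZR z) by lra.
  replace (4 * INR xi * fst Q) with (2 * (IZR z + 1)) by lra. ring.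
Qed.

(* On the cell the wave runs through [-1, 1] in the direction [powerRZ (-1) (z + 1)]. *)
Lemma J_on_cell_value z (P : pt) t : -1 <= t <= 1 ->
  2 * INR xi * fst P = IZR z + (1 + powerRZ (-1) (z + 1) * t) / 2 ->
  J eta xi P = (fst P, snd P + eta * t).
Proof.
  intros Ht HP. pose proof (powerRZ_m1_mul_bound (z + 1) t Ht) as Hsg.
  set (sg := powerRZ (-1) (z + 1)) in HP, Hsg.
  unfold J. rewrite (phi_on_cell xi z) by lra. fold sg.
  replace (4 * INR xi * fst P) with (2 * IZR z + 1 + sg * t) by lra.
  replace (sg * (2 * IZR z + 1 + sg * t - 2 * IZR z - 1)) with ((sg * sg) * t) by ring.
  unfold sg. rewrite powerRZ_m1_sqr. f_equal. ring.
Qed.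

Definition cell_pieces (F : seg -> Prop) : seg -> Prop :=
  fun s => exists A B z t0 t1, F (A, B) /\ 0 <= t0 <= 1 /\ 0 <= t1 <= 1 /\
    2 * INR xi * fst (seg_point A B t0) = IZR z /\
    2 * INR xi * fst (seg_point A B t1) = IZR z + 1 /\
    s = (J eta xi (seg_point A B t0), J eta xi (seg_point A B t1)).

Lemma cell_piece_point (A B : pt) z t0 t1 lam :
  2 * INR xi * fst (seg_point A B t0) = IZR z ->
  2 * INR xi * fst (seg_point A B t1) = IZR z + 1 -> 0 <= lam <= 1 ->
  seg_point (J eta xi (seg_point A B t0)) (J eta xi (seg_point A B t1)) lam
  = J eta xi (seg_point A B (t0 + lam * (t1 - t0))).
Proof.
  intros H0 H1 Hlam. rewrite <- seg_point_sub.
  symmetry. apply (J_seg_point_on_cell z); lra.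
Qed.

Lemma cell_pieces_in_image (F : seg -> Prop) p :
  union_segs (cell_pieces F) p -> image (J eta xi) (union_segs F) p.
Proof.
  intros [s [[A [B [z [t0 [t1 [HF [Ht0 [Ht1 [H0 [H1 ->]]]]]]]]]] [lam [Hlam ->]]]].
  exists (seg_point A B (t0 + lam * (t1 - t0))). split.
  - exists (A, B). split; [exact HF|]. exists (t0 + lam * (t1 - t0)). split; [nra | reflexivity].
  - rewrite <- (cell_piece_point A B z); auto.
Qed.

Lemma fst_J (P : pt) : fst (J eta xi P) = fst P.
Proof. reflexivity. Qed.

Lemma cell_piece_slope (A B : pt) z t0 t1 : fst B - fst A <> 0 ->
  2 * INR xi * fst (seg_point A B t0) = IZR z ->
  2 * INR xi * fst (seg_point A B t1) = IZR z + 1 ->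
  fst (seg_point A B t1) - fst (seg_point A B t0) = / (2 * INR xi) /\
  slope (J eta xi (seg_point A B t0), J eta xi (seg_point A B t1))
  = slope (A, B) + 4 * INR xi * eta * powerRZ (-1) (z + 1).
Proof.
  intros Hdx H0 H1.
  assert (Hxi : INR xi <> 0) by lra.
  assert (Hw : fst (seg_point A B t1) - fst (seg_point A B t0) = / (2 * INR xi)).
  { apply (Rmult_eq_reg_l (2 * INR xi)); [|lra]. rewrite Rinv_r by lra. lra. }
  split; [exact Hw|].
  unfold slope at 1. cbn [fst snd]. rewrite !fst_J, (J_cell_rise z) by assumption.
  rewrite seg_point_rise, Hw by exact Hdx. field. exact Hxi.
Qed.

Lemma cell_pieces_steep (F : seg -> Prop) M m s : 0 <= m ->
  (forall s, F s -> slope_abs_lt s M) -> 2 * M + m < 4 * INR xi * Rabs eta ->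
  cell_pieces F s -> slope_abs_gt s m /\ Rabs eta < seg_len s.
Proof.
  intros Hm Hslope Hxi [A [B [z [t0 [t1 [HF [_ [_ [H0 [H1 ->]]]]]]]]]].
  destruct (slope_abs_ltP A B M (Hslope _ HF)) as [Hdx Hq].
  pose proof (Rabs_pos (slope (A, B))).
  destruct (cell_piece_slope A B z t0 t1 Hdx H0 H1) as [Hw Hs].
  set (s := (J eta xi (seg_point A B t0), J eta xi (seg_point A B t1))) in Hs |- *.
  assert (Hc : 0 < 2 * INR xi) by lra.
  assert (Hjump : Rabs (4 * INR xi * eta * powerRZ (-1) (z + 1)) = 4 * INR xi * Rabs eta).
  { rewrite !Rabs_mult, Rabs_powerRZ_m1, (Rabs_right 4), (Rabs_right (INR xi)); lra. }
  assert (Hsteep : 4 * INR xi * Rabs eta - M < Rabs (slope s)).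
  { rewrite Hs. pose proof (Rabs_plus_ge (slope (A, B)) (4 * INR xi * eta * powerRZ (-1) (z + 1))).
    lra. }
  split.
  - right. change (m < Rabs (slope s)). lra.
  - assert (Hrise := rise_slope (J eta xi (seg_point A B t0)) (J eta xi (seg_point A B t1))).
    rewrite !fst_J, Hw in Hrise. specialize (Hrise (Rinv_neq_0_compat _ (Rgt_not_eq _ _ Hc))).
    eapply Rlt_le_trans; [|apply abs_snd_le_dist2].
    rewrite Rabs_minus_sym. unfold s; cbn [fst snd]. rewrite Hrise. fold s.
    rewrite Rabs_mult, (Rabs_right (/ _)) by (apply Rle_ge, Rlt_le, Rinv_0_lt_compat; lra).
    apply (Rmult_lt_reg_r (2 * INR xi)); [lra|].
    rewrite Rmult_assoc, Rinv_l by lra. lra.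
Qed.

Lemma cell_pieces_near (F : seg -> Prop) (A B : pt) t0 t : F (A, B) -> fst B - fst A <> 0 ->
  1 <= INR xi * Rabs (fst B - fst A) -> 0 <= t0 <= 1 -> -1 <= t <= 1 ->
  exists tau, Rabs (fst (seg_point A B tau) - fst (seg_point A B t0)) <= / INR xi /\
    union_segs (cell_pieces F) (fst (seg_point A B tau), snd (seg_point A B tau) + eta * t).
Proof.
  intros HF Hdx Hwide Ht0 Ht.
  set (c := 2 * INR xi). assert (Hc : 0 < c) by (unfold c; lra).
  pose proof (seg_point_fst_between A B t0 Ht0) as Hu.
  set (u := fst (seg_point A B t0)) in Hu |- *.
  set (lo := Rmin (fst A) (fst B)) in Hu. set (hi := Rmax (fst A) (fst B)) in Hu.
  assert (Hwidth : hi - lo = Rabs (fst B - fst A)) by apply Rmax_minus_Rmin.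
  destruct (int_cell_near (c * lo) (c * hi) (c * u)) as [z [Hlo [Hhi [Hz Hz1]]]].
  { split; apply Rmult_le_compat_l; lra. }
  { unfold c. nra. }
  assert (Habscissa : forall w, c * lo <= w <= c * hi ->
            exists t', 0 <= t' <= 1 /\ 2 * INR xi * fst (seg_point A B t') = w).
  { intros w Hw. destruct (seg_point_at_abscissa A B (w / c) Hdx) as [t' [Ht' E]].
    - fold lo hi. assert (Ew : c * (w / c) = w) by (field; lra).
      split; apply (Rmult_le_reg_l c); lra.
    - exists t'. split; [exact Ht'|]. fold c. rewrite E. field. lra. }
  destruct (Habscissa (IZR z)) as [t0' [Ht0' H0]]; [lra|].
  destruct (Habscissa (IZR z + 1)) as [t1' [Ht1' H1]]; [lra|].
  pose proof (powerRZ_m1_mul_bound (z + 1) t Ht) as Hsg.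
  set (lam := (1 + powerRZ (-1) (z + 1) * t) / 2).
  assert (Hlam : 0 <= lam <= 1) by (unfold lam; lra).
  set (tau := t0' + lam * (t1' - t0')).
  assert (Htau : c * fst (seg_point A B tau) = IZR z + lam).
  { unfold tau. rewrite <- seg_point_sub. unfold seg_point at 1; cbn [fst].
    transitivity (c * fst (seg_point A B t0')
      + lam * (c * fst (seg_point A B t1') - c * fst (seg_point A B t0'))); [ring|].
    unfold c. rewrite H0, H1. ring. }
  exists tau. split.
  - replace (/ INR xi) with (2 / c) by (unfold c; field; lra).
    apply Rabs_le_div; lra.
  - rewrite <- (J_on_cell_value z (seg_point A B tau) t Ht) by (fold c; rewrite Htau; reflexivity).
    unfold tau. rewrite <- (cell_piece_point A B z) by assumption.
    exists (J eta xi (seg_point A B t0'), J eta xi (seg_point A B t1')). split.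
    + exists A, B, z, t0', t1'. repeat (split; [assumption|]). reflexivity.
    + exists lam. split; [exact Hlam | reflexivity].
Qed.

Lemma cell_pieces_dense (F : seg -> Prop) (X : pt -> Prop) M l eps eps' :
  (forall s, F s -> slope_abs_lt s M) -> (forall s, F s -> l < seg_len s) ->
  1 + M < INR xi * l -> 1 + M < INR xi * eps' ->
  eps_dense (union_segs F) eps X ->
  eps_dense (union_segs (cell_pieces F)) (eps + eps') (Str X (0, eta)).
Proof.
  intros Hslope Hlen Hl Heps' Hdense y [x [t [HX [Ht ->]]]].
  destruct (Hdense x HX) as [g [[[A B] [HF [t0 [Ht0 Hg]]]] Hgx]].
  change (g = seg_point A B t0) in Hg. subst g.
  destruct (slope_abs_ltP A B M (Hslope _ HF)) as [Hdx Hq].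
  assert (Hwide : 1 <= INR xi * Rabs (fst B - fst A)).
  { assert (Hrise : snd A - snd B = slope (A, B) * (fst A - fst B))
      by (pose proof (rise_slope A B Hdx); lra).
    pose proof (dist2_le_of_rise A B _ Hrise) as HAB.
    pose proof (Hlen _ HF) as HlAB. unfold seg_len in HlAB; cbn [fst snd] in HlAB.
    rewrite Rabs_minus_sym in HAB.
    pose proof (Rabs_pos (fst B - fst A)). pose proof (Rabs_pos (slope (A, B))).
    assert (l < (1 + M) * Rabs (fst B - fst A)) by nra.
    assert (1 + M < (1 + M) * (INR xi * Rabs (fst B - fst A))) by nra.
    nra. }
  destruct (cell_pieces_near F A B t0 t HF Hdx Hwide Ht0 Ht) as [tau [Hclose Hmem]].
  eexists; split; [exact Hmem|].
  eapply Rle_lt_trans;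
    [apply (dist2_triangle _ _ (fst (seg_point A B t0), snd (seg_point A B t0) + eta * t))|].
  replace (fst x + t * fst (0, eta), snd x + t * snd (0, eta))
    with (fst x, snd x + eta * t) by (cbn [fst snd]; f_equal; ring).
  rewrite !dist2_shift.
  assert (dist2 (seg_point A B tau) (seg_point A B t0) < eps').
  { eapply Rle_lt_trans; [apply dist2_le_of_rise, seg_point_rise, Hdx|].
    assert (Hfine : (1 + M) * / INR xi < eps').
    { apply (Rmult_lt_reg_r (INR xi)); [lra|].
      rewrite Rmult_assoc, Rinv_l by lra. lra. }
    pose proof (Rabs_pos (slope (A, B))).
    pose proof (Rabs_pos (fst (seg_point A B tau) - fst (seg_point A B t0))).
    eapply Rle_lt_trans; [|exact Hfine].
    apply Rmult_le_compat; lra. }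
  lra.
Qed.

End Cell_pieces.

Definition eventually (P : nat -> Prop) : Prop :=
  exists n, forall k, (n <= k)%nat -> P k.

Lemma eventually_and (P Q : nat -> Prop) :
  eventually P -> eventually Q -> eventually (fun k => P k /\ Q k).
Proof.
  intros [n HP] [n' HQ]. exists (Nat.max n n').
  intros k Hk. split; [apply HP | apply HQ]; lia.
Qed.

Lemma eventually_lt_INR_mul a b : 0 < b -> eventually (fun k => a < INR k * b).
Proof.
  intros Hb. destruct (INR_unbounded (a / b)) as [n Hn]. exists n.
  intros k Hk. apply le_INR in Hk.
  apply (Rmult_lt_compat_r b) in Hn; [|exact Hb].
  unfold Rdiv in Hn. rewrite Rmult_assoc, Rinv_l, Rmult_1_r in Hn by lra. nra.
Qed.

Theorem mainTheorem11 :
  forall (a eps' l m M : R), 0 < a -> 0 < eps' -> 0 < l -> 0 < m -> 0 < M ->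
  exists xi0 : nat, (1 <= xi0)%nat /\
  forall (eta : R), Rabs eta = a ->
  forall (X : pt -> Prop) (eps : R) (F : seg -> Prop),
    (exists x, X x) -> 0 < eps ->
    eps_dense (union_segs F) eps X ->
    (forall s, F s -> slope_abs_lt s M) ->
    (forall s, F s -> l < seg_len s) ->
    forall xi : nat, (xi0 <= xi)%nat ->
    exists F' : seg -> Prop,
      (forall p, union_segs F' p -> image (J eta xi) (union_segs F) p) /\
      eps_dense (union_segs F') (eps + eps') (Str X (0, eta)) /\
      (forall s, F' s -> slope_abs_gt s m) /\
      (forall s, F' s -> Rabs eta < seg_len s).
Proof.
  intros a eps' l m M Ha Heps' Hl Hm HM.
  destruct (eventually_and _ _ (eventually_lt_INR_mul (2 * M + m) (4 * a) ltac:(lra))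
             (eventually_and _ _ (eventually_lt_INR_mul (1 + M) l Hl)
                                 (eventually_lt_INR_mul (1 + M) eps' Heps'))) as [n Hn].
  exists (Nat.max 1 n). split; [lia|].
  intros eta Heta X eps F _ _ Hdense Hslope Hlen xi Hxi.
  destruct (Hn xi ltac:(lia)) as [Hsteep [Hlong Hfine]].
  assert (Hxi_pos : 0 < INR xi) by (apply lt_0_INR; lia).
  assert (Hsteep_eta : 2 * M + m < 4 * INR xi * Rabs eta) by (rewrite Heta; lra).
  pose proof (fun s => cell_pieces_steep eta xi Hxi_pos F M m s (Rlt_le _ _ Hm) Hslope Hsteep_eta)
    as Hpieces.
  exists (cell_pieces eta xi F). split; [|split; [|split]].
  - apply cell_pieces_in_image.
  - exact (cell_pieces_dense eta xi Hxi_pos F X M l eps eps' Hslope Hlen Hlong Hfine Hdense).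
  - intros s Hs. apply (Hpieces s Hs).
  - intros s Hs. apply (Hpieces s Hs).
Qed.
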